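(* Suppose $G$ is a topological graph whose edge relation is transitive and such that, for the quotient map $\pi\colon V(G)\to |G|$, we have $\operatorname{card}(\pi^{-1}(x))\le 2$ for every $x\in|G|$. Then $\dim|G|\le 1$.
   Context: A topological graph is a pair $G=(V(G),E(G))$ where $V(G)$ is a compact, second countable, zero-dimensional space and $E(G)\subseteq V(G)^2$ is a closed, reflexive and symmetric relation. If $E(G)$ is also transitive (so an equivalence relation), the topological realization $|G|$ is the quotient space $V(G)/E(G)$, and $\pi$ denotes the quotient map. $\dim$ is covering dimension. *)

From HB Require Import structures.
From mathcomp Require Import all_boot all_order all_algebra.
From mathcomp Require Import all_classical cardinality topology generic_quotient.
Set Implicit Arguments. Unset Strict Implicit. Unset Printing Implicit Defensive.
Local Open Scope classical_set_scope.
Local Open Scope card_scope.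

Definition covering_dim_le (X : topologicalType) (n : nat) : Prop :=
  forall (k : nat) (U : 'I_k -> set X),
    (forall i, open (U i)) -> \bigcup_i U i = [set: X] ->
    exists (m : nat) (W : 'I_m -> set X),
      [/\ forall j, open (W j),
          \bigcup_j W j = [set: X],
          forall j, exists i, W j `<=` U i &
          forall x : X, [set j | W j x] #<= `I_n.+1].

(* Pull a finite open cover U of |G| back to V and refine it to a clopen
   partition C_0, ..., C_(k-1) of V (V is compact and zero-dimensional).  An
   equivalence class contained in a single piece C_a lies in the saturated core
   of C_a.  Otherwise it meets pieces C_a and C_b with a < b, and then it lies in
   the closed saturated set [C_a] ∩ [⋃_(l > a) C_l], where [.] denotes
   saturation; saturations of closed sets are closed because E is closed and V
   is compact.  As classes have at most two points, these "straddling" sets are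
   pairwise disjoint: a class straddling at i and at j > i would meet C_i, C_j
   and some C_l with l > j.  Separating them by disjoint clopen sets G_i, the
   saturated cores of the C_i and of the G_i ∩ π⁻¹(U_i) form two families of
   pairwise disjoint saturated open sets covering V; their images under π
   refine U, and every point of |G| lies in at most one set of each family. *)

From HB Require Import structures.
From mathcomp Require Import all_boot all_order all_algebra.
From mathcomp Require Import all_classical cardinality topology generic_quotient.
From mathcomp Require Import finmap.
Set Implicit Arguments. Unset Strict Implicit.
Local Open Scope classical_set_scope.
Local Open Scope card_scope.
Local Open Scope quotient_scope.

Lemma trivIsetT_eq (T I : Type) (F : I -> set T) (i j : I) (x : T) :
  trivIset setT F -> F i x -> F j x -> i = j.
Proof. by move=> tF Fix Fjx; apply: tF => //; exists x. Qed.

Lemma card_le2_three (X : Type) (A : set X) (a b c : X) :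
  A #<= `I_2 -> A a -> A b -> A c -> [\/ a = b, a = c | b = c].
Proof.
move=> /pcard_leP/injfunPex [f f2 finj] Aa Ab Ac.
have eq_f x y : A x -> A y -> f x = f y -> x = y.
  by move=> Ax Ay; apply: finj; rewrite in_setE.
have [fab|fab] := eqVneq (f a) (f b); first by constructor 1; exact: eq_f.
have [fac|fac] := eqVneq (f a) (f c); first by constructor 2; exact: eq_f.
have [fbc|fbc] := eqVneq (f b) (f c); first by constructor 3; exact: eq_f.
move: fab fac fbc (f2 a Aa) (f2 b Ab) (f2 c Ac) => /=.
by case: (f a) => [|[|?]]; case: (f b) => [|[|?]]; case: (f c) => [|[|?]].
Qed.

(* [compact_cover] is stated for pointed spaces. *)
Definition pointed_at (T : topologicalType) (x0 : T) : Type := T.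
HB.instance Definition _ (T : topologicalType) (x0 : T) :=
  Topological.copy (pointed_at x0) T.
HB.instance Definition _ (T : topologicalType) (x0 : T) :=
  isPointed.Build (pointed_at x0) x0.

Lemma compact_cover_compact (T : topologicalType) (A : set T) :
  compact A -> cover_compact A.
Proof.
move=> cA I D f fo Af; have [[x0 _]|A0] := pselect (exists x, A x).
  by have : @compact (pointed_at x0) A by []; rewrite compact_cover; apply.
exists fset0 => [i|x Ax]; first by rewrite inE.
by case: A0; exists x.
Qed.

Lemma compact_finite_subcover (T : topologicalType) (K : set T)
    (f : T -> set T) :
  compact K -> (forall x, K x -> open (f x) /\ f x x) ->
  exists D : {fset T}, [set` D] `<=` K /\ K `<=` \bigcup_(x in [set` D]) f x.
Proof.
move=> cK fK; have [D DK KD] := compact_cover_compact cK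
  (fun x Kx => (fK x Kx).1) (fun x Kx => ex_intro2 _ _ x Kx (fK x Kx).2).
by exists D; split => // x /DK; rewrite in_setE.
Qed.

Lemma clopen_bigcup_finite (T : topologicalType) (I : choiceType) (A : set I)
    (F : I -> set T) :
  finite_set A -> (forall i, A i -> clopen (F i)) ->
  clopen (\bigcup_(i in A) F i).
Proof.
move=> fA cF; split; first by apply: bigcup_open => i /cF [].
by apply: closed_bigcup => // i /cF [].
Qed.

Definition disjointify (T : Type) (k : nat) (D : 'I_k -> set T) (i : 'I_k) :=
  D i `\` \bigcup_(j in [set j : 'I_k | (j < i)%N]) D j.

Section Disjointify.
Variables (T : Type) (k : nat) (D : 'I_k -> set T).

Lemma disjointify_sub i : disjointify D i `<=` D i.
Proof. by move=> v []. Qed.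

Lemma disjointify_trivIset : trivIset setT (disjointify D).
Proof.
move=> i j _ _ [v [[Div nDiv] [Djv nDjv]]].
have [ij|ji|/val_inj//] := ltngtP i j.
- by case: nDjv; exists i.
- by case: nDiv; exists j.
Qed.

Lemma disjointify_cover i v : D i v -> exists j, disjointify D j v.
Proof.
move=> Div; have [j /asboolP Djv jmin] :=
  @arg_minnP _ i (fun j => `[< D j v >]) val (asboolT Div).
exists j; split=> // -[l /= lj Dlv].
by move: (jmin l (asboolT Dlv)); rewrite leqNgt lj.
Qed.

End Disjointify.

Lemma disjointify_clopen (T : topologicalType) k (D : 'I_k -> set T) i :
  (forall i, clopen (D i)) -> clopen (disjointify D i).
Proof.
move=> cD; apply: clopenI; first exact: cD.
apply: (@clopenC _ _ set0); apply: clopen_bigcup_finite => [|j _].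
  exact: finite_finset.
exact: cD.
Qed.

Section CompactZeroDimensional.
Variable T : topologicalType.
Hypothesis zT : zero_dimensional T.

Lemma zero_dimensional_hausdorff : hausdorff_space T.
Proof.
rewrite open_hausdorff => x y /zT [U [[oU cU] Ux nUy]].
exists (U, ~` U); first by split; rewrite !in_setE.
split => //=; first exact: closed_openC.
by apply/eqP; rewrite setICr.
Qed.

Hypothesis cT : compact [set: T].

Lemma clopen_finite_subcover (K : set T) (f : T -> set T) : closed K ->
  (forall x, K x -> clopen (f x) /\ f x x) ->
  exists C, [/\ clopen C, K `<=` C & C `<=` \bigcup_(x in K) f x].
Proof.
move=> clK fK; have [D [DK KD]] := compact_finite_subcover
  (subclosed_compact clK cT (subsetT K)) (fun x Kx => conj (fK x Kx).1.1 (fK x Kx).2).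
exists (\bigcup_(x in [set` D]) f x); split => //.
- by apply: clopen_bigcup_finite => [|x /DK Kx]; [exact: finite_fset|case: (fK x Kx)].
- by move=> v [x /DK Kx fxv]; exists x.
Qed.

Lemma clopen_separation_point (a : T) (B : set T) : closed B -> ~ B a ->
  exists C, [/\ clopen C, C a & C `<=` ~` B].
Proof.
move=> clB nBa.
have sepB b : exists U : set T, B b -> [/\ clopen U, U b & ~ U a].
  have [Bb|nBb] := pselect (B b); last by exists set0 => /nBb.
  have /zT [U [clU Ub nUa]] : b != a by apply: contra_notN nBa => /eqP <-.
  by exists U.
have [f fB] := choice sepB.
have [C [clC BC Cf]] := clopen_finite_subcover clB
  (fun b Bb => let: And3 clf fb _ := fB b Bb in conj clf fb).
exists (~` C); split => [||b nCb Bb]; [exact: clopenC| |exact/nCb/BC].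
by move=> /Cf [b Bb]; case: (fB b Bb).
Qed.

Lemma clopen_separation (A B : set T) : closed A -> closed B -> A `<=` ~` B ->
  exists C, [/\ clopen C, A `<=` C & C `<=` ~` B].
Proof.
move=> clA clB AB.
have sepB a : exists U : set T, A a -> [/\ clopen U, U a & U `<=` ~` B].
  have [Aa|nAa] := pselect (A a); last by exists set0 => /nAa.
  by have [U ?] := clopen_separation_point clB (AB a Aa); exists U.
have [f fA] := choice sepB.
have [C [clC AC Cf]] := clopen_finite_subcover clA
  (fun a Aa => let: And3 clf fa _ := fA a Aa in conj clf fa).
exists C; split => // b /Cf [a Aa fab].
by case: (fA a Aa) => _ _; apply.
Qed.

Lemma clopen_partition_refinement k (P : 'I_k -> set T) :
  (forall i, open (P i)) -> (forall v, exists i, P i v) ->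
  exists C : 'I_k -> set T, [/\ forall i, clopen (C i), forall i, C i `<=` P i,
    forall v, exists i, C i v & trivIset setT C].
Proof.
move=> oP covP.
have nbhsP v : exists p : 'I_k * set T, [/\ clopen p.2, p.2 v & p.2 `<=` P p.1].
  have [i Piv] := covP v.
  have [N [clN Nv NP]] :=
    clopen_separation_point (open_closedC (oP i)) (fun nPiv => nPiv Piv).
  by exists (i, N); split => // w /NP /contrapT.
have [g gP] := choice nbhsP.
have [D [_ covD]] := @compact_finite_subcover _ _ (fun x => (g x).2) cT
  (fun x _ => let: And3 clg gx _ := gP x in conj clg.1 gx).
pose E i := \bigcup_(x in [set` D] `&` [set x | (g x).1 = i]) (g x).2.
have clE i : clopen (E i).
  apply: clopen_bigcup_finite => [|x _]; last by case: (gP x).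
  exact/finite_setIl/finite_fset.
exists (disjointify E); split.
- by move=> i; apply: disjointify_clopen.
- move=> i v /(@disjointify_sub _ _ E) [x [_ <-]].
  by case: (gP x) => _ _; apply.
- move=> v; have [x Dx gxv] := covD v I.
  by apply: (@disjointify_cover _ _ E (g x).1); exists x.
- exact: disjointify_trivIset.
Qed.

Lemma clopen_trivIset_separation k (H : 'I_k -> set T) :
  (forall i, closed (H i)) -> trivIset setT H ->
  exists G : 'I_k -> set T, [/\ forall i, clopen (G i),
    forall i, H i `<=` G i & trivIset setT G].
Proof.
move=> clH trivH.
have sepH i : exists G, [/\ clopen G, H i `<=` G &
    G `<=` ~` \bigcup_(j in [set j | j != i]) H j].
  apply: clopen_separation => //.
    by apply: closed_bigcup => [|j _]; [exact: finite_finset|exact: clH].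
  move=> x Hix [j /= ji Hjx]; move: ji.
  by rewrite (trivIsetT_eq trivH Hjx Hix) eqxx.
have [G0 G0P] := choice sepH.
exists (disjointify G0); split.
- by move=> i; apply: disjointify_clopen => j; case: (G0P j).
- move=> i v Hiv; split; first by case: (G0P i) => _ HG _; apply: HG.
  move=> [j /= ji G0jv]; case: (G0P j) => _ _ G0jH; apply: (G0jH v G0jv).
  by exists i => //=; rewrite neq_ltn ji orbT.
- exact: disjointify_trivIset.
Qed.

End CompactZeroDimensional.

Section Saturation.
Variables (T : topologicalType) (e : equiv_rel T).

Definition saturated (A : set T) := forall v w, e v w -> A v -> A w.
Definition saturation (A : set T) := [set v | exists2 w, A w & e v w].
Definition saturated_core (A : set T) := [set v | forall w, e v w -> A w].

Lemma saturation_saturated A : saturated (saturation A).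
Proof.
move=> v w evw [u Au evu]; exists u => //.
by apply: equiv_trans evu; rewrite equiv_sym.
Qed.

Lemma saturation_sub A B : saturated B -> A `<=` B -> saturation A `<=` B.
Proof. by move=> satB AB v [w /AB Bw evw]; apply: satB Bw; rewrite equiv_sym. Qed.

Lemma saturated_core_sub A : saturated_core A `<=` A.
Proof. by move=> v; apply. Qed.

Lemma saturated_core_saturated A : saturated (saturated_core A).
Proof. by move=> v w evw coreAv u ewu; apply: coreAv; exact: equiv_trans ewu. Qed.

Lemma sub_saturated_core A B : saturated A -> A `<=` B -> A `<=` saturated_core B.
Proof. by move=> satA AB v Av w evw; apply/AB/(satA v). Qed.

Lemma saturatedI A B : saturated A -> saturated B -> saturated (A `&` B).
Proof.
by move=> satA satB v w evw [Av Bv]; split; [exact: satA Av|exact: satB Bv].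
Qed.

Lemma saturated_coreE A : saturated_core A = ~` saturation (~` A).
Proof.
apply/seteqP; split => [v coreAv [w nAw evw]|v nsatv w evw]; first exact/nAw/coreAv.
by apply: contrapT => nAw; apply: nsatv; exists w.
Qed.

Hypotheses (cT : compact [set: T]) (hT : hausdorff_space T)
  (clE : closed [set p : T * T | e p.1 p.2]).

Lemma saturation_closed A : closed A -> closed (saturation A).
Proof.
move=> clA.
have -> : saturation A = fst @` ([set p : T * T | e p.1 p.2] `&` [set: T] `*` A).
  apply/seteqP; split => [v [w Aw evw]|_ [[v w] [/= evw [_ Aw]] <-]].
    by exists (v, w).
  by exists w.
apply: compact_closed => //; apply: continuous_compact.
  by apply: continuous_subspaceT => x; exact: cvg_fst.
rewrite setIC; apply: compact_closedI => //.
exact/compact_setX/(subclosed_compact clA cT).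
Qed.

Lemma saturated_core_open A : open A -> open (saturated_core A).
Proof.
by move=> oA; rewrite saturated_coreE; apply/closed_openC/saturation_closed/open_closedC.
Qed.

End Saturation.

Lemma subfamily_trivIset (T I : Type) (D : set I) (F G : I -> set T) :
  (forall i, G i `<=` F i) -> trivIset D F -> trivIset D G.
Proof. by move=> GF tF i j Di Dj [x [/GF Fix /GF Fjx]]; apply: tF => //; exists x. Qed.

Definition disjoint_saturated_refinement (T : topologicalType) (e : equiv_rel T)
    k (P A : 'I_k -> set T) :=
  [/\ forall i, open (A i), forall i, saturated e (A i),
      forall i, A i `<=` P i & trivIset setT A].

Section Straddling.
Variables (T : topologicalType) (e : equiv_rel T) (k : nat) (C : 'I_k -> set T).

Definition straddling (i : 'I_k) := saturation e (C i) `&`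
  saturation e (\bigcup_(l in [set l : 'I_k | (i < l)%N]) C l).

Lemma straddling_saturated i : saturated e (straddling i).
Proof. by apply: saturatedI; apply: saturation_saturated. Qed.

Lemma straddling_sub i : straddling i `<=` saturation e (C i).
Proof. by move=> v []. Qed.

Lemma straddling_closed :
  compact [set: T] -> hausdorff_space T -> closed [set p : T * T | e p.1 p.2] ->
  (forall i, closed (C i)) -> forall i, closed (straddling i).
Proof.
move=> cT hT clE clC i.
apply: closedI; apply: (saturation_closed cT hT clE) => //.
by apply: closed_bigcup => [|l _]; [exact: finite_finset|exact: clC].
Qed.

Lemma core_or_straddling : (forall v, exists i, C i v) ->
  forall v, (exists a, saturated_core e (C a) v) \/ (exists i, straddling i v).
Proof.
move=> covC v; have [a Cav] := covC v.
have [coreCv|] := pselect (saturated_core e (C a) v); first by left; exists a.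
move=> /existsNP [w /not_implyP [evw nCaw]]; right.
have [b Cbw] := covC w.
have [ab|ba|/val_inj ab] := ltngtP a b.
- by exists a; split; [exists v|exists w => //; exists b].
- by exists b; split; [exists w|exists v => //; exists a].
- by move: Cbw; rewrite -ab.
Qed.

Lemma straddling_trivIset : trivIset setT C ->
  (forall v, [set w | e v w] #<= `I_2) -> trivIset setT straddling.
Proof.
move=> trivC classes2.
suff lt_excl (i j : 'I_k) v : (i < j)%N -> straddling i v -> straddling j v -> False.
  move=> i j _ _ [v [Hiv Hjv]].
  have [ij|ji|/val_inj//] := ltngtP i j; exfalso.
  - exact: lt_excl ij Hiv Hjv.
  - exact: lt_excl ji Hjv Hiv.
move=> ij [[u Ciu evu] _] [[w Cjw evw] [x [l /= jl Clx] evx]].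
have [uw|ux|wx] := card_le2_three (classes2 v) evu evw evx.
- by move: ij; rewrite (trivIsetT_eq trivC Ciu (_ : C j u)) ?ltnn // uw.
- by move: (ltn_trans ij jl); rewrite (trivIsetT_eq trivC Ciu (_ : C l u)) ?ltnn // ux.
- by move: jl; rewrite (trivIsetT_eq trivC Cjw (_ : C l w)) ?ltnn // wx.
Qed.

End Straddling.

Lemma two_disjoint_saturated_refinements (T : topologicalType) (e : equiv_rel T)
    k (P : 'I_k -> set T) :
  compact [set: T] -> zero_dimensional T -> closed [set p : T * T | e p.1 p.2] ->
  (forall v, [set w | e v w] #<= `I_2) ->
  (forall i, open (P i)) -> (forall i, saturated e (P i)) ->
  (forall v, exists i, P i v) ->
  exists A B : 'I_k -> set T,
    [/\ disjoint_saturated_refinement e P A, disjoint_saturated_refinement e P B &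
        forall v, (exists i, A i v) \/ (exists i, B i v)].
Proof.
move=> cT zT clE classes2 oP satP covP.
have hT := zero_dimensional_hausdorff zT.
have [C [clC CP covC trivC]] := clopen_partition_refinement zT cT oP covP.
have [G [clG HG trivG]] := clopen_trivIset_separation zT cT
  (straddling_closed cT hT clE (fun j => (clC j).2))
  (straddling_trivIset trivC classes2).
have straddlingP i : straddling e C i `<=` P i.
  by move=> v /straddling_sub; exact: saturation_sub (satP i) (CP i) v.
exists (fun i => saturated_core e (C i)), (fun i => saturated_core e (G i `&` P i)).
split; [split|split|].
- by move=> i; apply: saturated_core_open cT hT clE _ (clC i).1.
- by move=> i; apply: saturated_core_saturated.
- by move=> i v /saturated_core_sub /CP.
- by apply: subfamily_trivIset trivC => i; apply: saturated_core_sub.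
- by move=> i; apply: saturated_core_open cT hT clE _ (openI (clG i).1 (oP i)).
- by move=> i; apply: saturated_core_saturated.
- by move=> i v /saturated_core_sub [].
- by apply: subfamily_trivIset trivG => i v /saturated_core_sub [].
- move=> v; case: (core_or_straddling e covC v) => [|[i Hiv]]; [by left|right; exists i].
  have HGP : straddling e C i `<=` G i `&` P i.
    by move=> w Hiw; split; [exact: HG|exact: straddlingP].
  exact: sub_saturated_core (@straddling_saturated _ e _ C i) HGP v Hiv.
Qed.

Section QuotientRefinement.
Variables (T : topologicalType) (e : equiv_rel T).
Local Notation Q := (quotient_topology {eq_quot e}).

Lemma pi_eq_equiv (a b : T) : \pi_Q a = \pi_Q b <-> e a b.
Proof.
by split => [|eab]; [move/(@eqquotP _ _ {eq_quot e})|apply/(@eqquotP _ _ {eq_quot e})].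
Qed.

Lemma preimage_pi_saturated (U : set Q) : saturated e (\pi_Q @^-1` U).
Proof. by move=> v w /pi_eq_equiv /= <-. Qed.

Lemma preimage_pi_image (S : set T) : saturated e S -> \pi_Q @^-1` (\pi_Q @` S) = S.
Proof.
move=> satS; apply/seteqP; split => [v [w Sw /pi_eq_equiv ewv]|v Sv]; last by exists v.
exact: satS Sw.
Qed.

Lemma pi_fiber (v : T) : \pi_Q @^-1` [set \pi_Q v] = [set w | e v w].
Proof.
apply/seteqP; split => w /=; first by move/pi_eq_equiv; rewrite equiv_sym.
by rewrite equiv_sym => /pi_eq_equiv.
Qed.

Lemma quotient_refinement_order1 k (U : 'I_k -> set Q) (A B : 'I_k -> set T) :
  disjoint_saturated_refinement e (fun i => \pi_Q @^-1` U i) A ->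
  disjoint_saturated_refinement e (fun i => \pi_Q @^-1` U i) B ->
  (forall v, (exists i, A i v) \/ (exists i, B i v)) ->
  exists m (W : 'I_m -> set Q),
    [/\ forall j, open (W j), \bigcup_j W j = [set: Q],
        forall j, exists i, W j `<=` U i &
        forall y : Q, [set j | W j y] #<= `I_2].
Proof.
move=> [oA satA AU trivA] [oB satB BU trivB] covAB.
pose F (s : 'I_k + 'I_k) := match s with inl i => A i | inr i => B i end.
pose W (j : 'I_(k + k)) := \pi_Q @` F (fintype.split j).
have satF s : saturated e (F s) by case: s.
have WE y j : W j y <-> F (fintype.split j) (repr y).
  by rewrite -[F (fintype.split j)](preimage_pi_image (satF _)) /= reprK.
exists (k + k), W; split.
- move=> j; rewrite /open /= /quotient_open preimage_pi_image //.
  by case: (fintype.split j).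
- apply/seteqP; split => // y _.
  case: (covAB (repr y)) => [[i Ai]|[i Bi]].
  + by exists (unsplit (inl i)) => //; apply/WE; rewrite unsplitK.
  + by exists (unsplit (inr i)) => //; apply/WE; rewrite unsplitK.
- move=> j; case Ej: (fintype.split j) => [i|i]; exists i => y [v];
    rewrite Ej => Fv <-.
  + exact: AU.
  + exact: BU.
- move=> y; apply/pcard_leP/injfunPex.
  exists (fun j : 'I_(k + k) => if fintype.split j is inl _ then 0%N else 1%N).
    by move=> j _ /=; case: (fintype.split j).
  move=> j1 j2; rewrite !in_setE => /WE F1 /WE F2 tag12.
  apply: (can_inj splitK); move: F1 F2 tag12.
  case: (fintype.split j1) => i1; case: (fintype.split j2) => i2 //= F1 F2 _.
  + by rewrite (trivIsetT_eq trivA F1 F2).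
  + by rewrite (trivIsetT_eq trivB F1 F2).
Qed.

End QuotientRefinement.

Theorem mainTheorem4 (V : topologicalType) (e : equiv_rel V) :
  compact [set: V] -> @second_countable V -> zero_dimensional V ->
  closed [set p : V * V | e p.1 p.2] ->
  (forall x : quotient_topology {eq_quot e},
      (\pi_(quotient_topology {eq_quot e}) @^-1` [set x]) #<= `I_2) ->
  covering_dim_le (quotient_topology {eq_quot e}) 1.
Proof.
move=> cV _ zV clE fibers2 k U oU covU.
have classes2 v : [set w | e v w] #<= `I_2 by rewrite -pi_fiber.
have covP v : exists i, (\pi_(quotient_topology {eq_quot e}) @^-1` U i) v.
  have [i _ Uiv] : (\bigcup_i U i) (\pi_(quotient_topology {eq_quot e}) v).
    by rewrite covU.
  by exists i.
have [A [B [refA refB covAB]]] := two_disjoint_saturated_refinements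
  cV zV clE classes2 oU (fun i => preimage_pi_saturated (U := U i)) covP.
exact: quotient_refinement_order1 refA refB covAB.
Qed.
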